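(* Let $t,t'\in B_n$ with $t\neq t'$, let $G$ be a digraph such that $\mathbb{A}(G)$ satisfies $t\approx t'$, and write $L=L_{t,t'}$, $\lambda=\lambda_{t,t'}$. Assume that $E_G=L+1$, that $u_0\to u_1\to\dots\to u_L\to u_{L+1}$ is an entryway to a nontrivial strongly connected component $K$, that $w$ is a vertex of $K$ with $(w,u_{L+1})\in E(G)$, and that $v_0\to v_1\to\dots\to v_\lambda$ is a walk in $G$. Then $(w,v_0)$ is an edge if and only if $(u_L,v_0)$ is an edge. Consequently, $\lambda_G<\lambda_{t,t'}$.
   Context: Digraphs $G=(V,E)$ have $E\subseteq V\times V$, loops allowed, possibly infinite. $\mathbb{A}(G)$ is the groupoid on $V\cup\{\infty\}$ with $xy=x$ if $x,y\in V$, $(x,y)\in E$, and $xy=\infty$ otherwise. $B_n$: binary terms with $x_1,\dots,x_n$ each occurring once in this order; $G(t)$: rooted tree defined by $G(x_i)$ a single vertex and $G(t_1t_2)=G(t_1)\cup G(t_2)$ plus an edge from the leftmost variable of $t_1$ to that of $t_2$; root $x_1$. $d_T$ is depth, $h$ height, $T_x$ the rooted induced subtree of $x$ and its descendants. With $T=G(t)$, $T'=G(t')$: $L_{t,t'}$ is the largest $m$ such that for all $x$, $d_T(x)\le m$ or $d_{T'}(x)\le m$ implies $d_T(x)=d_{T'}(x)$; $\Lambda=\{x:d_T(x)\ne d_{T'}(x),\ L_{t,t'}+1\in\{d_T(x),d_{T'}(x)\}\}$ and $\lambda_{t,t'}=\min\{\max(h(T_x),h(T'_x)):x\in\Lambda\}$.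 A strongly connected component (SCC) is trivial if it is a single vertex without a loop, nontrivial otherwise. A path $v_0\to\dots\to v_\ell$ is an entryway to a nontrivial SCC $K$ if $v_0,\dots,v_{\ell-1}$ lie in trivial SCCs and $v_\ell\in K$; $E_G$ is the maximal length of an entryway ($\infty$ if unbounded, $-\infty$ if none). $\lambda_G$ is the largest integer $m$ such that there exist an entryway $u_0\to\dots\to u_{E_G}$ to a nontrivial SCC $K$, a vertex $w\in K$ with $(w,u_{E_G})\in E$, and a walk $v_0\to\dots\to v_m$ such that exactly one of $(w,v_0)$, $(u_{E_G-1},v_0)$ is an edge ($\infty$ if unbounded, $-\infty$ if no such $m$). *)

From mathcomp Require Import all_boot.
Set Implicit Arguments. Unset Strict Implicit. Unset Printing Implicit Defensive.

Inductive term : Type := Var of nat | App of term & term.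

Fixpoint leaves (t : term) : seq nat :=
  match t with Var i => [:: i] | App t1 t2 => leaves t1 ++ leaves t2 end.

(* B_n, with variables x_1..x_n encoded as 0..n-1 *)
Definition in_B (n : nat) (t : term) : Prop := leaves t = iota 0 n.

Fixpoint lv (t : term) : nat :=
  match t with Var i => i | App t1 _ => lv t1 end.

(* None plays the role of infinity *)
Definition gmul (V : Type) (E : V -> V -> bool) (a b : option V) : option V :=
  match a, b with
  | Some x, Some y => if E x y then Some x else None
  | _, _ => None
  end.

Fixpoint eval (V : Type) (E : V -> V -> bool) (s : nat -> option V) (t : term)
  : option V :=
  match t with
  | Var i => s i
  | App t1 t2 => gmul E (eval E s t1) (eval E s t2)
  end.

Definition satisfies (V : Type) (E : V -> V -> bool) (t t' : term) : Prop :=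
  forall s : nat -> option V, eval E s t = eval E s t'.

Definition is_walk (T : Type) (E : T -> T -> bool) (p : nat -> T) (k : nat) : Prop :=
  forall i, i < k -> E (p i) (p i.+1).

Fixpoint tedge (t : term) (a b : nat) : bool :=
  match t with
  | Var _ => false
  | App t1 t2 => [|| tedge t1 a b, tedge t2 a b | (a == lv t1) && (b == lv t2)]
  end.

Fixpoint depth (t : term) (x : nat) : nat :=
  match t with
  | Var _ => 0
  | App t1 t2 => if x \in leaves t1 then depth t1 x else (depth t2 x).+1
  end.

Definition height (t : term) (x h : nat) : Prop :=
  (exists p : nat -> nat, p 0 = x /\ is_walk (tedge t) p h) /\
  (forall (p : nat -> nat) k, p 0 = x -> is_walk (tedge t) p k -> k <= h).

Definition L_prop (n : nat) (t t' : term) (m : nat) : Prop :=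
  forall x, x < n -> (depth t x <= m \/ depth t' x <= m) -> depth t x = depth t' x.

Definition is_L (n : nat) (t t' : term) (L : nat) : Prop :=
  L_prop n t t' L /\ forall m, L_prop n t t' m -> m <= L.

Definition in_Lambda (n : nat) (t t' : term) (L x : nat) : Prop :=
  x < n /\ depth t x <> depth t' x /\
  (depth t x = L.+1 \/ depth t' x = L.+1).

Definition is_lambda (n : nat) (t t' : term) (L lam : nat) : Prop :=
  (exists x h h', in_Lambda n t t' L x /\ height t x h /\ height t' x h' /\
                  lam = maxn h h') /\
  (forall x h h', in_Lambda n t t' L x -> height t x h -> height t' x h' ->
                  lam <= maxn h h').

Definition reach (V : Type) (E : V -> V -> bool) (x y : V) : Prop :=
  exists (p : nat -> V) k, p 0 = x /\ p k = y /\ is_walk E p k.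

Definition sc (V : Type) (E : V -> V -> bool) (x y : V) : Prop :=
  reach E x y /\ reach E y x.

Definition trivial_scc (V : Type) (E : V -> V -> bool) (v : V) : Prop :=
  (forall u, sc E u v -> u = v) /\ ~~ E v v.

Definition entryway (V : Type) (E : V -> V -> bool) (u : nat -> V) (l : nat) : Prop :=
  is_walk E u l /\ (forall i, i < l -> trivial_scc E (u i)) /\ ~ trivial_scc E (u l).

Inductive ext : Type := NegInf | Fin of nat | PosInf.

Definition ext_lt (a b : ext) : Prop :=
  match a, b with
  | NegInf, NegInf => False
  | NegInf, _ => True
  | Fin x, Fin y => x < y
  | Fin _, PosInf => True
  | _, _ => False
  end.

Definition is_sup_ext (P : nat -> Prop) (x : ext) : Prop :=
  match x with
  | NegInf => ~ (exists m, P m)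
  | Fin m => P m /\ (forall m', P m' -> m' <= m)
  | PosInf => forall k, exists m, P m /\ k <= m
  end.

Definition EG_is (V : Type) (E : V -> V -> bool) (x : ext) : Prop :=
  is_sup_ext (fun l => exists u, entryway E u l) x.

Definition lambdaG_set (V : Type) (E : V -> V -> bool) (m : nat) : Prop :=
  exists (e : nat) (u : nat -> V) (w : V) (v : nat -> V),
    EG_is E (Fin e.+1) /\ entryway E u e.+1 /\ sc E w (u e.+1) /\
    E w (u e.+1) /\ is_walk E v m /\ E w (v 0) != E (u e) (v 0).

Definition lambdaG_is (V : Type) (E : V -> V -> bool) (x : ext) : Prop :=
  is_sup_ext (lambdaG_set E) x.

From mathcomp Require Import all_boot zify.
From mathcomp Require Import boolp.
Set Implicit Arguments. Unset Strict Implicit. Unset Printing Implicit Defensive.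

(* An assignment of vertices of G to the variables evaluates t in A(G) to
   its value at the root when it is a homomorphism G(t) -> G and to infinity
   otherwise, so t ~ t' holds in A(G) iff G(t) and G(t') have the same
   homomorphisms into G.  Take x in Lambda with, say, d_t(x) = L+1 < d_t'(x);
   its parent q in G(t) has depth L in both trees, and its parent p in G(t')
   has depth > L in both trees.  For an infinite walk X and a shift s, sending
   the subtree G(t)_x along the walk v and every other vertex y to
   X(d_t(y) + s) is a homomorphism of G(t), hence of G(t'); the edge p -> x
   of G(t') then shows that X(L+s) -> v_0 forces X(d_t(p)+s) -> v_0, and
   symmetrically X(d_t'(p)+s) -> v_0 forces X(L+s) -> v_0.  Iterating gives
   M > 0 with X(L) -> v_0 iff X(L+M) -> v_0 for every infinite walk X.
   Apply this to u_0 ... u_L followed by a closed walk through u_{L+1} and w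
   around K, and to that closed walk alone, timed to pass w at time L: the
   two walks agree after time L.  As E_G = L+1, every witness of lambda_G
   uses such an entryway, so no walk of length >= lambda is a witness. *)

Section Digraph.
Variables (T : Type) (R : T -> T -> bool).

Definition infinite_walk (p : nat -> T) : Prop := forall i, R (p i) (p i.+1).

Lemma is_walk_leq p k m : k <= m -> is_walk R p m -> is_walk R p k.
Proof. by move=> km W i ik; apply: W; apply: leq_trans km. Qed.

Lemma reach_refl x : reach R x x.
Proof. by exists (fun=> x), 0. Qed.

Lemma reach_step x a b : reach R x a -> R a b -> reach R x b.
Proof.
move=> [p [k [p0 [pk W]]]] Rab.
exists (fun i => if i <= k then p i else b), k.+1.
rewrite leq0n ltnn; split=> //; split=> // i ik.
case: ltngtP => [/W //|ki|->]; last by rewrite pk.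
by move: ik; rewrite ltnS leqNgt ki.
Qed.

Lemma reach_last x b : reach R x b -> b = x \/ exists2 a, reach R x a & R a b.
Proof.
move=> [p [[|k] [p0 [pk W]]]]; first by left; rewrite -pk.
right; exists (p k); last by rewrite -pk; apply: W.
by exists p, k; do 2!split=> //; move=> i ik; apply: W; apply: ltnW.
Qed.

Lemma reach_ind (P : T -> Prop) x :
  P x -> (forall a b, P a -> R a b -> P b) -> forall y, reach R x y -> P y.
Proof.
move=> Px PR y [p [k [p0 [<- W]]]]; elim: k W => [|k IH] W; first by rewrite p0.
by apply: (PR (p k)); [apply: IH => i ik; apply: W; apply: ltnW | apply: W].
Qed.

Lemma is_walk_graded (g : T -> nat) p k :
  (forall a b, R a b -> g b = (g a).+1) -> is_walk R p k -> g (p k) = g (p 0) + k.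
Proof.
move=> gR; elim: k => [|k IH] W; first by rewrite addn0.
by rewrite (gR _ _ (W k (ltnSn k))) IH ?addnS // => i ik; apply: W; apply: ltnW.
Qed.

Lemma closed_walk_periodic c k :
  is_walk R c k -> R (c k) (c 0) -> infinite_walk (fun m => c (m %% k.+1)).
Proof.
move=> W Rk m /=.
have -> : m.+1 %% k.+1 = (m %% k.+1).+1 %% k.+1 by rewrite -addn1 -modnDml addn1.
have := ltn_pmod m (ltn0Sn k); rewrite ltnS leq_eqVlt => /predU1P [->|mk].
- by rewrite modnn.
- by rewrite (@modn_small (m %% k.+1).+1) ?ltnS //; apply: W.
Qed.

End Digraph.

Definition increasing_leaves (t : term) : bool := pairwise ltn (leaves t).

Lemma in_B_increasing n t : in_B n t -> increasing_leaves t.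
Proof.
by rewrite /increasing_leaves => ->; rewrite -(sorted_pairwise ltn_trans) iota_ltn_sorted.
Qed.

Lemma in_B_mem_leaves n t x : in_B n t -> (x \in leaves t) = (x < n).
Proof. by move=> ->; rewrite mem_iota. Qed.

Lemma increasing_leaves_App t1 t2 : increasing_leaves (App t1 t2) ->
  [/\ increasing_leaves t1, increasing_leaves t2 &
      forall a b, a \in leaves t1 -> b \in leaves t2 -> a < b].
Proof.
rewrite /increasing_leaves /= pairwise_cat => /and3P [/allrelP lt12 inc1 inc2].
by split.
Qed.

Lemma increasing_leaves_disjoint t1 t2 a : increasing_leaves (App t1 t2) ->
  a \in leaves t1 -> a \notin leaves t2.
Proof.
by case/increasing_leaves_App=> _ _ lt12 a1; apply/negP=> /(lt12 _ _ a1); rewrite ltnn.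
Qed.

Lemma lv_in_leaves t : lv t \in leaves t.
Proof. by elim: t => [i|t1 IH1 t2 IH2]; rewrite /= ?inE // mem_cat IH1. Qed.

Lemma depth_lv t : depth t (lv t) = 0.
Proof. by elim: t => [i|t1 IH1 t2 IH2] //=; rewrite lv_in_leaves. Qed.

Lemma tedge_leaves t a b : tedge t a b -> a \in leaves t /\ b \in leaves t.
Proof.
elim: t => [//|t1 IH1 t2 IH2] /=; rewrite !mem_cat.
by case/or3P=> [/IH1 [-> ->]|/IH2 [-> ->]|/andP [/eqP -> /eqP ->]];
  rewrite ?lv_in_leaves ?orbT.
Qed.

Lemma tedge_ltn t a b : increasing_leaves t -> tedge t a b -> a < b.
Proof.
elim: t => [//|t1 IH1 t2 IH2] /= /increasing_leaves_App [inc1 inc2 lt12].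
case/or3P=> [/(IH1 inc1)|/(IH2 inc2)|/andP [/eqP -> /eqP ->]] //.
by apply: lt12; apply: lv_in_leaves.
Qed.

Lemma tedge_depth t a b : increasing_leaves t -> tedge t a b -> depth t b = (depth t a).+1.
Proof.
elim: t => [//|t1 IH1 t2 IH2] /= inc.
have [inc1 inc2 _] := increasing_leaves_App inc.
have out2 := increasing_leaves_disjoint inc.
case/or3P=> [ab|ab|/andP [/eqP -> /eqP ->]].
- by have [-> ->] := tedge_leaves ab; apply: IH1.
- have [a2 b2] := tedge_leaves ab.
  rewrite (negbTE (contraL (out2 _) a2)) (negbTE (contraL (out2 _) b2)).
  by rewrite (IH2 inc2 ab).
- by rewrite lv_in_leaves (negbTE (contraL (out2 _) (lv_in_leaves t2))) !depth_lv.
Qed.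

Lemma tedge_parent_uniq t a a' b :
  increasing_leaves t -> tedge t a b -> tedge t a' b -> a = a'.
Proof.
elim: t => [//|t1 IH1 t2 IH2] /= inc.
have [inc1 inc2 _] := increasing_leaves_App inc.
have out2 := increasing_leaves_disjoint inc.
have not_lv2 c : tedge t2 c (lv t2) -> False.
  by move/(tedge_depth inc2); rewrite depth_lv.
case/or3P=> [ab|ab|/andP [/eqP -> /eqP ->]] /or3P [ab'|ab'|/andP [/eqP -> /eqP eb]] //.
- exact: IH1 ab ab'.
- by move: (out2 _ (tedge_leaves ab).2); rewrite (tedge_leaves ab').2.
- by move: (out2 _ (tedge_leaves ab).2); rewrite eb lv_in_leaves.
- by move: (out2 _ (tedge_leaves ab').2); rewrite (tedge_leaves ab).2.
- exact: IH2 ab ab'.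
- by move: ab; rewrite eb => /not_lv2.
- by move: (out2 _ (tedge_leaves ab').2); rewrite lv_in_leaves.
- by move/not_lv2: ab'.
Qed.

Lemma tedge_parent_exists t x : x \in leaves t -> x != lv t -> exists a, tedge t a x.
Proof.
elim: t => [i|t1 IH1 t2 IH2] /=; first by rewrite inE => ->.
rewrite mem_cat => /orP [x1|x2] xlv.
- by have [a ax] := IH1 x1 xlv; exists a; rewrite ax.
- have [->|xlv2] := eqVneq x (lv t2); first by exists (lv t1); rewrite !eqxx !orbT.
  by have [a ax] := IH2 x2 xlv2; exists a; rewrite ax orbT.
Qed.

Lemma reach_tedge_leq t x y : increasing_leaves t -> reach (tedge t) x y -> x <= y.
Proof.
move=> inc; apply: (reach_ind (P := leq x)) => // a b xa /(tedge_ltn inc) ab.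
exact: leq_trans xa (ltnW ab).
Qed.

Lemma reach_tedge_depth t x h y : increasing_leaves t -> height t x h ->
  reach (tedge t) x y -> depth t x <= depth t y <= depth t x + h.
Proof.
move=> inc [_ hmax] [p [k [p0 [pk W]]]].
rewrite -p0 -pk (is_walk_graded (fun a b => @tedge_depth t a b inc) W).
by rewrite leq_addr leq_add2l (hmax p k p0 W).
Qed.

Lemma L_prop_sym n t t' m : L_prop n t t' m -> L_prop n t' t m.
Proof. by move=> LP x xn dx; apply/esym/LP => //; case: dx; auto. Qed.

Lemma shift_iff (P : nat -> Prop) a b :
  (forall s, P s -> P (s + a)) -> (forall s, P (s + b) -> P s) ->
  forall s, P s <-> P (s + a * b).
Proof.
move=> fwd bwd s; split.
- rewrite mulnC; elim: b {bwd} => [|b IH] Ps; first by rewrite addn0.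
  by rewrite mulSn addnCA addnC; apply/fwd/IH.
- elim: a {fwd} => [|a IH]; first by rewrite addn0.
  by rewrite mulSn addnCA addnC => /bwd.
Qed.

Section Evaluation.
Variables (V : Type) (E : V -> V -> bool).

Definition tree_hom (t : term) (f : nat -> V) : Prop :=
  forall a b, tedge t a b -> E (f a) (f b).

Lemma eval_tree_hom t f : tree_hom t f -> eval E (fun i => Some (f i)) t = Some (f (lv t)).
Proof.
elim: t => [//|t1 IH1 t2 IH2] /= hom.
have hom1 : tree_hom t1 f by move=> a b ab; apply: hom => /=; rewrite ab.
have hom2 : tree_hom t2 f by move=> a b ab; apply: hom => /=; rewrite ab orbT.
by rewrite IH1 // IH2 //= hom //= !eqxx !orbT.
Qed.

Lemma eval_SomeP t f y : eval E (fun i => Some (f i)) t = Some y ->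
  y = f (lv t) /\ tree_hom t f.
Proof.
elim: t y => [i|t1 IH1 t2 IH2] y /=; first by case=> <-.
case e1: (eval _ _ t1) => [a|] //; case e2: (eval _ _ t2) => [b|] //=.
case: ifP => // Eab [<-].
have [ea hom1] := IH1 _ e1; have [eb hom2] := IH2 _ e2; subst a b.
by split=> // c d /or3P [/hom1|/hom2|/andP [/eqP -> /eqP ->]].
Qed.

Lemma satisfies_tree_hom t t' f : satisfies E t t' -> tree_hom t f -> tree_hom t' f.
Proof. by move=> sat /eval_tree_hom; rewrite sat => /eval_SomeP []. Qed.

Definition graft t x (v X : nat -> V) s (y : nat) : V :=
  if `[< reach (tedge t) x y >] then v (depth t y - depth t x) else X (depth t y + s).

Lemma graft_tree_hom t x q h lam v X s :
  increasing_leaves t -> height t x h -> h <= lam -> tedge t q x ->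
  is_walk E v lam -> infinite_walk E X -> E (X (depth t q + s)) (v 0) ->
  tree_hom t (graft t x v X s).
Proof.
move=> inc hx hlam qx Wv WX Eq a b ab; rewrite /graft.
have dab := tedge_depth inc ab.
have [xa|xa] := pselect (reach (tedge t) x a).
- have xb := reach_step xa ab.
  have /andP [dxa _] := reach_tedge_depth inc hx xa.
  have /andP [_ dxb] := reach_tedge_depth inc hx xb.
  rewrite !asboolT // dab subSn //; apply: Wv; rewrite dab in dxb; lia.
rewrite (asboolF xa); have [xb|xb] := pselect (reach (tedge t) x b); last first.
  by rewrite (asboolF xb) dab addSn; apply: WX.
have bx : b = x.
  case: (reach_last xb) => [//|[a' xa' a'b]].
  by case: xa; rewrite (tedge_parent_uniq inc ab a'b).
move: ab dab; rewrite (asboolT xb) bx => ax _.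
by rewrite (tedge_parent_uniq inc ax qx) subnn.
Qed.

Lemma parent_edge_transfer t t' x q p h lam v X s :
  increasing_leaves t -> increasing_leaves t' -> satisfies E t t' ->
  height t x h -> h <= lam -> tedge t q x -> tedge t' p x ->
  is_walk E v lam -> infinite_walk E X ->
  E (X (depth t q + s)) (v 0) -> E (X (depth t p + s)) (v 0).
Proof.
move=> inc inc' sat hx hlam qx px Wv WX Eq.
have := satisfies_tree_hom sat (graft_tree_hom inc hx hlam qx Wv WX Eq) px.
have xp : ~ reach (tedge t) x p.
  by move/(reach_tedge_leq inc); rewrite leqNgt (tedge_ltn inc' px).
by rewrite /graft (asboolF xp) asboolT ?subnn //; apply: reach_refl.
Qed.

Lemma in_Lambda_period_l n t t' L x h h' lam v :
  in_B n t -> in_B n t' -> satisfies E t t' -> L_prop n t t' L -> x < n ->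
  depth t x = L.+1 -> depth t x <> depth t' x ->
  height t x h -> height t' x h' -> h <= lam -> h' <= lam -> is_walk E v lam ->
  exists2 M, 0 < M & forall X, infinite_walk E X ->
    (E (X L) (v 0) <-> E (X (L + M)) (v 0)).
Proof.
move=> Bt Bt' sat LP xn dx dxx' hx hx' hlam hlam' Wv.
have inc := in_B_increasing Bt; have inc' := in_B_increasing Bt'.
have [q qx] : exists q, tedge t q x.
  apply: tedge_parent_exists; first by rewrite (in_B_mem_leaves _ Bt).
  by apply: contra_eqN dx => /eqP ->; rewrite depth_lv.
have dq : depth t q = L by apply/eq_add_S; rewrite -dx (tedge_depth inc qx).
have qn : q < n by rewrite -(in_B_mem_leaves _ Bt) (tedge_leaves qx).1.
have dq' : depth t' q = L by rewrite -(LP q qn) ?dq //; left.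
have dx' : L.+1 < depth t' x.
  case: (leqP (depth t' x) L) => [small|]; last by move: dxx'; rewrite dx; lia.
  by have := LP x xn (or_intror small); lia.
have [p px] : exists p, tedge t' p x.
  apply: tedge_parent_exists; first by rewrite (in_B_mem_leaves _ Bt').
  by apply: contraTneq dx' => ->; rewrite depth_lv.
have dp' := tedge_depth inc' px.
have dp : L < depth t p.
  rewrite ltnNge; apply/negP => small.
  have pn : p < n by rewrite -(in_B_mem_leaves _ Bt') (tedge_leaves px).1.
  by have := LP p pn (or_introl small); lia.
exists ((depth t p - L) * (depth t' p - L)); first by rewrite muln_gt0 !subn_gt0 dp; lia.
move=> X WX.
have fwd s : E (X (L + s)) (v 0) -> E (X (L + (s + (depth t p - L)))) (v 0).
  have -> : L + (s + (depth t p - L)) = depth t p + s by lia.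
  rewrite -dq; exact: parent_edge_transfer inc inc' sat hx hlam qx px Wv WX.
have bwd s : E (X (L + (s + (depth t' p - L)))) (v 0) -> E (X (L + s)) (v 0).
  have -> : L + (s + (depth t' p - L)) = depth t' p + s by lia.
  rewrite -dq'.
  exact: parent_edge_transfer inc' inc (fun s => esym (sat s)) hx' hlam' px qx Wv WX.
by have := shift_iff (P := fun s => E (X (L + s)) (v 0)) fwd bwd 0; rewrite addn0.
Qed.

Lemma in_Lambda_period n t t' L x h h' v :
  in_B n t -> in_B n t' -> satisfies E t t' -> L_prop n t t' L -> in_Lambda n t t' L x ->
  height t x h -> height t' x h' -> is_walk E v (maxn h h') ->
  exists2 M, 0 < M & forall X, infinite_walk E X ->
    (E (X L) (v 0) <-> E (X (L + M)) (v 0)).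
Proof.
move=> Bt Bt' sat LP [xn [dxx' [dx|dx']]] hx hx' Wv.
- exact: in_Lambda_period_l Bt Bt' sat LP xn dx dxx' hx hx' (leq_maxl h h') (leq_maxr h h') Wv.
- exact: in_Lambda_period_l Bt' Bt (fun s => esym (sat s)) (L_prop_sym LP) xn dx' (nesym dxx')
    hx' hx (leq_maxr h h') (leq_maxl h h') Wv.
Qed.

Lemma entryway_edge_iff n t t' L lam u w v :
  in_B n t -> in_B n t' -> satisfies E t t' -> is_L n t t' L -> is_lambda n t t' L lam ->
  entryway E u L.+1 -> sc E w (u L.+1) -> E w (u L.+1) -> is_walk E v lam ->
  (E w (v 0) <-> E (u L) (v 0)).
Proof.
move=> Bt Bt' sat [LP _] [[x [h [h' [Lx [hx [hx' ->]]]]]] _] [Wu _].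
move=> [_ [c [k [c0 [ck Wc]]]]] Ew Wv.
have [M M_gt0 period] := in_Lambda_period Bt Bt' sat LP Lx hx hx' Wv.
pose cyc m := c (m %% k.+1).
have Wcyc : infinite_walk E cyc by apply: closed_walk_periodic; rewrite ?ck ?c0.
pose X1 i := if i <= L then u i else cyc (i - L.+1).
pose X2 i := cyc (i + k * L.+1).
have W1 : infinite_walk E X1.
  move=> i; rewrite /X1; case: ltngtP => [iL|Li|->].
  - by apply: Wu; apply: ltnW.
  - by rewrite subSn //; apply: Wcyc.
  - by rewrite subnn /cyc mod0n c0; apply: Wu.
have W2 : infinite_walk E X2 by move=> i; rewrite /X2 addSn; apply: Wcyc.
have X1L : X1 L = u L by rewrite /X1 leqnn.
have X2L : X2 L = w.
  rewrite /X2 /cyc -ck; have -> : L + k * L.+1 = L * k.+1 + k by lia.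
  by rewrite modnMDl modn_small.
have X12 : X1 (L + M) = X2 (L + M).
  rewrite /X1 /X2 /cyc leqNgt -{1}(addn0 L) ltn_add2l M_gt0 /=.
  have -> : L + M + k * L.+1 = L.+1 * k.+1 + (L + M - L.+1) by lia.
  by rewrite modnMDl.
by rewrite -X1L -X2L (period _ W1) (period _ W2) X12.
Qed.

End Evaluation.

Lemma is_sup_ext_Fin_inj (P : nat -> Prop) a b :
  is_sup_ext P (Fin a) -> is_sup_ext P (Fin b) -> a = b.
Proof. by move=> [Pa maxa] [Pb maxb]; apply/eqP; rewrite eqn_leq maxa ?maxb. Qed.

Lemma is_sup_ext_lt (P : nat -> Prop) B :
  (forall m, P m -> m < B) -> exists x, is_sup_ext P x /\ ext_lt x (Fin B).
Proof.
move=> bound; have [[m0 Pm0]|none] := pselect (exists m, P m); last by exists NegInf.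
have [m /asboolP Pm maxm] := @ex_maxnP (fun m => `[< P m >]) B
  (ex_intro _ m0 (asboolT Pm0)) (fun m Pm => ltnW (bound m (asboolW Pm))).
by exists (Fin m); split; [split=> // m' /asboolT /maxm | exact: bound].
Qed.

Theorem lemma6p29 (n : nat) (t t' : term) (V : Type) (E : V -> V -> bool)
    (L lam : nat) :
  in_B n t -> in_B n t' -> t <> t' -> satisfies E t t' ->
  is_L n t t' L -> is_lambda n t t' L lam ->
  EG_is E (Fin L.+1) ->
  (forall (u : nat -> V) (w : V) (v : nat -> V),
      entryway E u L.+1 -> sc E w (u L.+1) -> E w (u L.+1) ->
      is_walk E v lam ->
      (E w (v 0) <-> E (u L) (v 0))) /\
  (exists x, lambdaG_is E x /\ ext_lt x (Fin lam)).
Proof.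
move=> Bt Bt' _ sat HL Hlam EG.
have edge_iff := entryway_edge_iff Bt Bt' sat HL Hlam.
split=> [u w v|]; first exact: edge_iff.
apply: is_sup_ext_lt => m [e [u [w [v [EGe [Eu [scw [Ew [Wv neq]]]]]]]]].
have [eL] := is_sup_ext_Fin_inj EGe EG; subst e.
rewrite ltnNge; apply: contraNN neq => lam_m.
have [wL Lw] := edge_iff u w v Eu scw Ew (is_walk_leq lam_m Wv).
by apply/eqP; apply/idP/idP.
Qed.
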